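(* Every word $W$ in the letters $\sigma_i,\sigma_i^{-1},x_i$ ($1\le i\le n-1$) is equal in $SB_n$ to $\Delta^m\overline{A}$ for some integer $m$ and some positive word $\overline{A}$ which is prime to $\Delta$ and is its own base; moreover this expression is unique: if $\Delta^m\overline{A}=\Delta^p\overline{C}$ in $SB_n$ with $m,p\in\mathbb Z$ and $\overline{A},\overline{C}$ positive words prime to $\Delta$ each equal to its own base, then $m=p$ and $\overline{A}\equiv\overline{C}$ (identical words).
   Context: Fix $n\ge 2$. The singular braid monoid $SB_n$ is the monoid with generators $\sigma_i,\sigma_i^{-1},x_i$ ($i=1,\dots,n-1$) and relations: $\sigma_i\sigma_j=\sigma_j\sigma_i$ and $x_ix_j=x_jx_i$ if $|i-j|>1$; $x_i\sigma_j=\sigma_jx_i$ if $|i-j|\ne1$; $\sigma_i\sigma_{i+1}\sigma_i=\sigma_{i+1}\sigma_i\sigma_{i+1}$; $\sigma_i\sigma_{i+1}x_i=x_{i+1}\sigma_i\sigma_{i+1}$; $\sigma_{i+1}\sigma_ix_{i+1}=x_i\sigma_{i+1}\sigma_i$; $\sigma_i\sigma_i^{-1}=\sigma_i^{-1}\sigma_i=1$. The positive singular braid monoid $SB_n^+$ has generators $\sigma_i,x_i$ and all these relations except the last. Positive words are words in $\sigma_i,x_i$; $A\doteq B$ means equality in $SB_n^+$; $\equiv$ means identity of words. $\Delta\equiv\sigma_1\cdots\sigma_{n-1}\,\sigma_1\cdots\sigma_{n-2}\cdots\sigma_1\sigma_2\,\sigma_1$. A positive word $A$ is prime to $\Delta$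 if there is no positive word $Z$ with $A\doteq\Delta Z$. Order positive words lexicographically with $\sigma_1<\sigma_2<\cdots<\sigma_{n-1}<x_1<\cdots<x_{n-1}$; the base of a positive word $W$ is the smallest (in this order) positive word positively equal to $W$ (positively equal words have equal length, so this is well defined). The form $\Delta^m\overline{A}$ is called the Garside left normal form of $W$, and $m$ its power. *)

From mathcomp Require Import all_boot all_order all_algebra.
From Stdlib Require Import Relations.
Set Implicit Arguments. Unset Strict Implicit. Unset Printing Implicit Defensive.

Inductive letter : Type :=
| Sg of nat
| Si of nat   (* sigma_i^{-1} *)
| X of nat.

Definition word := seq letter.

Definition letter_index (a : letter) : nat :=
  match a with Sg i => i | Si i => i | X i => i end.

Definition valid_word (n : nat) (w : word) : Prop :=
  all (fun a => (1 <= letter_index a) && (letter_index a <= n - 1)) w.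

Definition positive_letter (a : letter) : bool :=
  match a with Si _ => false | _ => true end.

Definition positive_word (w : word) : Prop := all positive_letter w.

Definition ok_idx (n i : nat) : Prop := 1 <= i /\ i <= n - 1.

Inductive pos_relation (n : nat) : word -> word -> Prop :=
| R_ss i j : ok_idx n i -> ok_idx n j -> 1 < `|(i:int) - (j:int)|%N ->
    pos_relation n [:: Sg i; Sg j] [:: Sg j; Sg i]
| R_xx i j : ok_idx n i -> ok_idx n j -> 1 < `|(i:int) - (j:int)|%N ->
    pos_relation n [:: X i; X j] [:: X j; X i]
| R_xs i j : ok_idx n i -> ok_idx n j -> `|(i:int) - (j:int)|%N != 1 ->
    pos_relation n [:: X i; Sg j] [:: Sg j; X i]
| R_braid i : ok_idx n i -> ok_idx n i.+1 ->
    pos_relation n [:: Sg i; Sg i.+1; Sg i] [:: Sg i.+1; Sg i; Sg i.+1]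
| R_sx1 i : ok_idx n i -> ok_idx n i.+1 ->
    pos_relation n [:: Sg i; Sg i.+1; X i] [:: X i.+1; Sg i; Sg i.+1]
| R_sx2 i : ok_idx n i -> ok_idx n i.+1 ->
    pos_relation n [:: Sg i.+1; Sg i; X i.+1] [:: X i; Sg i.+1; Sg i].

Inductive sb_relation (n : nat) : word -> word -> Prop :=
| R_pos l r : pos_relation n l r -> sb_relation n l r
| R_inv1 i : ok_idx n i -> sb_relation n [:: Sg i; Si i] [::]
| R_inv2 i : ok_idx n i -> sb_relation n [:: Si i; Sg i] [::].

Definition step (R : word -> word -> Prop) (w1 w2 : word) : Prop :=
  exists u v l r, R l r /\ w1 = u ++ l ++ v /\ w2 = u ++ r ++ v.

Definition sb_eq (n : nat) : relation word :=
  clos_refl_sym_trans word (step (sb_relation n)).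

Definition pos_eq (n : nat) : relation word :=
  clos_refl_sym_trans word (step (pos_relation n)).

(* Delta = sigma_1 ... sigma_{n-1} sigma_1 ... sigma_{n-2} ... sigma_1 sigma_2 sigma_1 *)
Definition Delta (n : nat) : word :=
  flatten [seq [seq Sg j.+1 | j <- iota 0 k] | k <- rev (iota 1 (n - 1))].

Definition inv_letter (a : letter) : letter :=
  match a with Sg i => Si i | Si i => Sg i | X i => X i end.

(* Delta^{-1} as a word (Delta contains only sigma letters) *)
Definition Delta_inv (n : nat) : word := rev (map inv_letter (Delta n)).

Definition Delta_pow (n : nat) (m : int) : word :=
  match m with
  | Posz k => flatten (nseq k (Delta n))
  | Negz k => flatten (nseq k.+1 (Delta_inv n))
  end.

Definition prime_to_Delta (n : nat) (A : word) : Prop :=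
  ~ exists Z, positive_word Z /\ valid_word n Z /\ pos_eq n A (Delta n ++ Z).

Definition letter_rank (n : nat) (a : letter) : nat :=
  match a with Sg i => i | X i => n + i | Si i => 2 * n + i end.

Fixpoint lex_le (s t : seq nat) : bool :=
  match s, t with
  | [::], _ => true
  | _ :: _, [::] => false
  | a :: s', b :: t' => (a < b) || ((a == b) && lex_le s' t')
  end.

Definition is_own_base (n : nat) (A : word) : Prop :=
  forall B, positive_word B -> valid_word n B -> pos_eq n A B ->
    lex_le (map (letter_rank n) A) (map (letter_rank n) B).

(* Since every sigma_i right-divides Delta, sigma_i^-1 = Delta^-1 Z_i with Z_i positive, and
   P Delta^-1 = Delta^-1 tau(P) where tau(sigma_i) = sigma_(n-i), tau(x_i) = x_(n-i).  Hence every
   word equals Delta^-k P with P positive; splitting off the largest power of Delta on the left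
   of P and taking the lexicographically least representative of the rest gives the normal form.
   Uniqueness rests on the cancellativity of SB_n^+, which we get from Dehornoy's word reversing:
   a common right multiple of a U and b V factors through the complement of a and b, by induction
   on length, the transitivity step being the cube condition on triples of generators.  That
   condition only depends on which indices are equal or adjacent, so it is checked by computation
   for indices in [1, 5] and transported to every n.  Cancellativity makes
   (k, P) ~ (l, Q) <-> Delta^l P = Delta^k Q an equivalence compatible with products, so positive
   words equal in SB_n are positively equal; then Delta-primality forces equal powers of Delta
   and the base condition forces identical words. *)

From HB Require Import structures.
From mathcomp Require Import all_boot all_order all_algebra zify.
From Stdlib Require Import Relations Classical.

Set Implicit Arguments. Unset Strict Implicit. Unset Printing Implicit Defensive.

Definition letter_code (a : letter) : nat * nat :=
  match a with Sg i => (0, i) | Si i => (1, i) | X i => (2, i) end.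
Definition letter_decode (p : nat * nat) : letter :=
  match p with (0, i) => Sg i | (1, i) => Si i | (_, i) => X i end.
Lemma letter_codeK : cancel letter_code letter_decode. Proof. by case. Qed.
HB.instance Definition _ := Countable.copy letter (can_type letter_codeK).

Local Notation crst := (clos_refl_sym_trans _).

Lemma rst_map (A B : Type) (R : relation A) (S : relation B) (g : A -> B) :
  (forall x y, R x y -> crst S (g x) (g y)) -> forall x y, crst R x y -> crst S (g x) (g y).
Proof.
move=> gR x y; elim=> [{}x {}y /gR|{}x|{}x {}y _ IH|{}x {}y z _ IH1 _ IH2] //.
- exact: rst_refl.
- exact: rst_sym.
- exact: rst_trans IH1 IH2.
Qed.

Lemma rst_invariant (A T : Type) (R : relation A) (F : A -> T) :
  (forall x y, R x y -> F x = F y) -> forall x y, crst R x y -> F x = F y.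
Proof.
move=> FR x y; elim=> [{}x {}y /FR|{}x|{}x {}y _ IH|{}x {}y z _ IH1 _ IH2] //.
by rewrite IH1.
Qed.

Section WordCongruence.
Variable rel : word -> word -> Prop.

Lemma step_cat u v l r : step rel l r -> step rel (u ++ l ++ v) (u ++ r ++ v).
Proof.
case=> [x [y [l' [r' [lr [-> ->]]]]]].
by exists (u ++ x), (y ++ v), l', r'; rewrite !catA.
Qed.

Lemma step_of_rel l r : rel l r -> step rel l r.
Proof. by move=> lr; exists [::], [::], l, r; rewrite !cats0. Qed.

Lemma cong_cat a b c d :
  crst (step rel) a b -> crst (step rel) c d -> crst (step rel) (a ++ c) (b ++ d).
Proof.
move=> Hab Hcd; apply: rst_trans (_ : crst (step rel) (b ++ c) _).
  apply: (rst_map (g := fun w => w ++ c)) Hab => x y /(step_cat [::] c) Hs.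
  exact: rst_step.
apply: (rst_map (g := cat b)) Hcd => x y /(step_cat b [::]); rewrite !cats0.
exact: rst_step.
Qed.

Lemma cong_invariant (T : Type) (F : word -> T) :
  (forall l r u v, rel l r -> F (u ++ l ++ v) = F (u ++ r ++ v)) ->
  forall x y, crst (step rel) x y -> F x = F y.
Proof. by move=> FR; apply: rst_invariant => x y [u [v [l [r [lr [-> ->]]]]]]; apply: FR. Qed.

End WordCongruence.

Definition generator n (a : letter) := positive_letter a && (1 <= letter_index a <= n - 1).
Definition gen_word n (w : word) := all (generator n) w.

Lemma gen_word_cat n u v : gen_word n (u ++ v) = gen_word n u && gen_word n v.
Proof. exact: all_cat. Qed.

Lemma gen_wordP n w : reflect (positive_word w /\ valid_word n w) (gen_word n w).
Proof.
rewrite /gen_word (eq_all (a2 := predI positive_letter (fun a => 1 <= letter_index a <= n - 1))) //.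
by rewrite all_predI; apply: andP.
Qed.

Section PositiveEquality.
Variable n : nat.
Local Notation pe := (pos_eq n).

Lemma pe_refl w : pe w w. Proof. exact: rst_refl. Qed.
Lemma pe_sym u v : pe u v -> pe v u. Proof. exact: rst_sym. Qed.
Lemma pe_trans u v w : pe u v -> pe v w -> pe u w. Proof. exact: rst_trans. Qed.
Lemma pe_cat a b c d : pe a b -> pe c d -> pe (a ++ c) (b ++ d). Proof. exact: cong_cat. Qed.
Lemma pe_catl a c d : pe c d -> pe (a ++ c) (a ++ d). Proof. exact/pe_cat/pe_refl. Qed.
Lemma pe_catr a b c : pe a b -> pe (a ++ c) (b ++ c).
Proof. by move/pe_cat; apply; apply: pe_refl. Qed.
Lemma pe_rel l r : pos_relation n l r -> pe l r.
Proof. by move=> lr; apply: rst_step; apply: step_of_rel. Qed.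

Lemma pos_relation_gen l r : pos_relation n l r -> gen_word n l /\ gen_word n r.
Proof.
by case=> [i j [? ?] [? ?] _|i j [? ?] [? ?] _|i j [? ?] [? ?] _|i [? ?] [? ?]
  |i [? ?] [? ?]|i [? ?] [? ?]]; rewrite /gen_word /generator /=; split; lia.
Qed.

Lemma pe_size u v : pe u v -> size u = size v.
Proof. by apply: cong_invariant => l r ? ? [i j|i j|i j|i|i|i]; rewrite !size_cat. Qed.

Lemma pe_gen u v : pe u v -> gen_word n u = gen_word n v.
Proof.
apply: cong_invariant => l r u' v' /pos_relation_gen [gen_l gen_r].
by rewrite !gen_word_cat gen_l gen_r.
Qed.

End PositiveEquality.

(** * Word reversing and left cancellativity *)

Definition adjacent (i j : nat) := (i.+1 == j) || (j.+1 == i).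

(* For distinct positive generators [a], [b], the defining relation of SB_n^+
   starting with [a] and [b] reads [a f = b g] with [complement a b = Some f] and
   [complement b a = Some g]; [None] means that no relation starts with [a] and [b]. *)
Definition complement (a b : letter) : option word :=
  match a, b with
  | Sg i, Sg j => Some (if adjacent i j then [:: Sg j; Sg i] else [:: Sg j])
  | X i, X j => if adjacent i j then None else Some [:: X j]
  | X i, Sg j => Some (if adjacent i j then [:: Sg j; Sg i] else [:: Sg j])
  | Sg j, X i => Some (if adjacent i j then [:: Sg i; X j] else [:: X i])
  | _, _ => None
  end.

Inductive reversal := Reversed of word & word | NoMultiple | OutOfFuel.

(* Right reversing of [a^-1 v]; [rec] reverses the remaining [q^-1 v']. *)
Definition reverse_letter (rec : word -> word -> reversal) (a : letter) (v : word) :=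
  match v with
  | [::] => Reversed [::] [:: a]
  | b :: v' =>
    if a == b then Reversed v' [::] else
    match complement a b, complement b a with
    | Some p, Some q => match rec q v' with Reversed q' w => Reversed (p ++ q') w | e => e end
    | _, _ => NoMultiple
    end
  end.

(* Right reversing of [u^-1 v] into [x y^-1], so that [u x = v y], with [k] units of fuel. *)
Fixpoint reverse (k : nat) (u v : word) : reversal :=
  match k, u with
  | 0, _ => OutOfFuel
  | _.+1, [::] => Reversed v [::]
  | k'.+1, a :: u' =>
    match reverse_letter (reverse k') a v with
    | Reversed x y => match reverse k' u' x with Reversed x' z => Reversed x' (y ++ z) | e => e end
    | e => e
    end
  end.

Section Reversing.
Variable n : nat.
Local Notation pe := (pos_eq n).

Lemma pos_relation_complement l r : pos_relation n l r ->
  exists a l' b r', [/\ l = a :: l', r = b :: r', a != b,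
    complement a b = Some l' & complement b a = Some r'].
Proof.
have far_abs (i j : nat) : (1 < `|(i:int) - (j:int)|%N) = (i.+1 < j) || (j.+1 < i).
  by apply/idP/idP; lia.
have adj_abs (i j : nat) : (`|(i:int) - (j:int)|%N == 1) = (i.+1 == j) || (j.+1 == i).
  by apply/idP/idP; lia.
case=> [i j _ _ H|i j _ _ H|i j _ _ H|i _ _|i _ _|i _ _];
  try rewrite ?far_abs ?adj_abs in H; do 4 eexists; split; try reflexivity;
  first [ apply/eqP => -[]; lia
        | rewrite /= /adjacent ?eqxx ?orbT //; case: ifP => // ?; exfalso; lia ].
Qed.

Definition head_factor (a : letter) (U : word) (b : letter) (V : word) :=
  if a == b then pe U V else
  exists p q W, [/\ complement a b = Some p, complement b a = Some q,
                    pe U (p ++ W) & pe V (q ++ W)].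

Definition head_factor_at N := forall a b U V, size U = N -> gen_word n (a :: U) ->
  pe (a :: U) (b :: V) -> head_factor a U b V.

Definition reversal_spec (r : reversal) (X Y : word) :=
  match r with
  | Reversed x y => exists W, pe X (x ++ W) /\ pe Y (y ++ W)
  | NoMultiple => False
  | OutOfFuel => True
  end.

Definition reversing_sound (rec : word -> word -> reversal) M := forall u v X Y,
  gen_word n (u ++ X) -> size (u ++ X) <= M -> pe (u ++ X) (v ++ Y) ->
  reversal_spec (rec u v) X Y.

Section BelowSize.
Variable M : nat.
Hypothesis factor_below : forall N, N < M -> head_factor_at N.

Lemma reverse_letter_sound rec : reversing_sound rec M ->
  forall a v X Y, gen_word n (a :: X) -> size X < M -> pe (a :: X) (v ++ Y) ->
  reversal_spec (reverse_letter rec a v) X Y.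
Proof.
move=> rec_sound a [|b v] X Y gen_aX sizeX aX_vY /=.
  by exists X; split; [apply: pe_refl | apply: pe_sym].
have := factor_below sizeX erefl gen_aX aX_vY.
rewrite /head_factor; case: eqP => [_ XY|_ [p [q [W [-> -> XpW vYqW]]]]].
  by exists Y; split => //; apply: pe_refl.
have gen_qW : gen_word n (q ++ W).
  by rewrite -(pe_gen vYqW); move: (pe_gen aX_vY); rewrite gen_aX => /esym/andP[].
have size_qW : size (q ++ W) <= M.
  by rewrite -(pe_size vYqW); move: (pe_size aX_vY) => /= [<-]; apply: ltnW.
have := rec_sound q v W Y gen_qW size_qW (pe_sym vYqW).
case: (rec q v) => [q' w [W' [WqW' YwW']]|//|//].
by exists W'; split => //; rewrite -catA; apply: pe_trans XpW _; apply: pe_catl.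
Qed.

Lemma reverse_sound k : reversing_sound (reverse k) M.
Proof.
elim: k => [|k IHk] [|a u] v X Y gen_uX size_uX uX_vY //=.
  by exists Y; split => //; apply: pe_refl.
have := reverse_letter_sound IHk gen_uX size_uX uX_vY.
case: (reverse_letter (reverse k) a v) => [x y [W [uXxW YyW]]|//|//].
have := IHk u x X W (proj2 (andP gen_uX)) (ltnW size_uX) uXxW.
case: (reverse k u x) => [x' z [W' [XxW' WzW']]|//|//].
by exists W'; split => //; rewrite -catA; apply: pe_trans YyW _; apply: pe_catl.
Qed.

Lemma pe_cancel_prefix q U V :
  gen_word n (q ++ U) -> size (q ++ U) <= M -> pe (q ++ U) (q ++ V) -> pe U V.
Proof.
elim: q => [//|a q IHq] /= gen_aqU size_qU qU_qV.
apply: IHq; [by case/andP: gen_aqU | exact: ltnW |].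
by have := factor_below size_qU erefl gen_aqU qU_qV; rewrite /head_factor eqxx.
Qed.

End BelowSize.

Lemma head_factor_sym a U b V : head_factor a U b V -> head_factor b V a U.
Proof.
rewrite /head_factor eq_sym; case: eqP => _; first exact: pe_sym.
by case=> p [q [W [? ? ? ?]]]; exists q, p, W.
Qed.

(* Dehornoy's cube condition on a triple of generators, with reversing fuel 20. *)
Definition cube_condition (a b c : letter) :=
  a != b -> b != c -> a != c -> forall pab pba pbc pcb,
  complement a b = Some pab -> complement b a = Some pba ->
  complement b c = Some pbc -> complement c b = Some pcb ->
  match reverse 20 pba pbc with
  | Reversed p' q' => exists r t s, [/\ complement a c = Some r, complement c a = Some t,
                                      pe (pab ++ p') (r ++ s) & pe (pcb ++ q') (t ++ s)]
  | NoMultiple => True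
  | OutOfFuel => False
  end.

Section CubeCondition.
Hypothesis cube : forall a b c,
  generator n a -> generator n b -> generator n c -> cube_condition a b c.

Section TransitivityBelowSize.
Variable N : nat.
Hypothesis factor_below : forall m, m < N -> head_factor_at m.

Lemma head_factor_cube a b c U V T pab pba pbc pcb W1 W2 :
  generator n a -> generator n b -> generator n c -> gen_word n V -> size V = N ->
  a != b -> b != c -> complement a b = Some pab -> complement b a = Some pba ->
  complement b c = Some pbc -> complement c b = Some pcb ->
  pe U (pab ++ W1) -> pe V (pba ++ W1) -> pe V (pbc ++ W2) -> pe T (pcb ++ W2) ->
  head_factor a U c T.
Proof.
move=> ga gb gc gen_V size_V ab bc Eab Eba Ebc Ecb UW1 VW1 VW2 TW2.
have gen_W1 : gen_word n (pba ++ W1) by rewrite -(pe_gen VW1).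
have size_W1 : size (pba ++ W1) <= N by rewrite -(pe_size VW1) size_V.
have W1_W2 : pe (pba ++ W1) (pbc ++ W2) by apply: pe_trans (pe_sym VW1) VW2.
rewrite /head_factor; case: eqP => [ac|/eqP ac].
  subst c; move: Ebc Ecb; rewrite Eba Eab => -[pba_pbc] -[pab_pcb]; subst pbc pcb.
  have W1W2 := pe_cancel_prefix factor_below gen_W1 size_W1 W1_W2.
  by apply: pe_trans UW1 _; apply: pe_trans (pe_catl _ W1W2) (pe_sym TW2).
have := reverse_sound factor_below 20 gen_W1 size_W1 W1_W2.
have := cube ga gb gc ab bc ac Eab Eba Ebc Ecb.
case: (reverse 20 pba pbc) => [p' q'|//|//] [r [t [s [Er Et pab_rs pcb_ts]]]] [W [W1W W2W]].
exists r, t, (s ++ W); split => //.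
  apply: pe_trans UW1 _; apply: pe_trans (pe_catl _ W1W) _; rewrite !catA; exact: pe_catr.
apply: pe_trans TW2 _; apply: pe_trans (pe_catl _ W2W) _; rewrite !catA; exact: pe_catr.
Qed.

Lemma head_factor_trans a b c U V T :
  size U = N -> gen_word n (a :: U) -> pe (a :: U) (b :: V) -> pe (b :: V) (c :: T) ->
  head_factor a U b V -> head_factor b V c T -> head_factor a U c T.
Proof.
move=> size_U gen_aU aU_bV bV_cT.
have gen_bV : gen_word n (b :: V) by rewrite -(pe_gen aU_bV).
have /andP[gc _] : gen_word n (c :: T) by rewrite -(pe_gen bV_cT).
case/andP: gen_bV => gb gen_V.
have size_V : size V = N by move: (pe_size aU_bV); rewrite /= size_U => -[].
rewrite /head_factor; case: (eqVneq a b) => [<-|ab].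
  case: (eqVneq a c) => [_|_]; first exact: pe_trans.
  by move=> UV [p [q [W [? ? VpW ?]]]]; exists p, q, W; split => //; apply: pe_trans UV VpW.
case: (eqVneq b c) => [<-|bc].
  rewrite (negbTE ab) => -[p [q [W [? ? ? VqW]]]] VT; exists p, q, W; split => //.
  exact: pe_trans (pe_sym VT) VqW.
move=> [pab [pba [W1 [Eab Eba UW1 VW1]]]] [pbc [pcb [W2 [Ebc Ecb VW2 TW2]]]].
have ga : generator n a by case/andP: gen_aU.
exact: (head_factor_cube ga gb gc gen_V size_V ab bc Eab Eba Ebc Ecb UW1 VW1 VW2 TW2).
Qed.

End TransitivityBelowSize.

Definition head_factor_words (x y : word) :=
  match x, y with
  | a :: U, b :: V => head_factor a U b V
  | [::], [::] => True
  | _, _ => False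
  end.

Lemma head_factor_all N : head_factor_at N.
Proof.
elim/ltn_ind: N => N factor_below a b U V size_U gen_aU.
suff : forall x y, pe x y -> size x = N.+1 -> gen_word n x -> head_factor_words x y.
  by move/[apply]; rewrite /= size_U; apply.
move=> x y; elim => {x y}.
- move=> x y [u [v [l [r [lr [-> ->]]]]]] size_x gen_x.
  case: u size_x gen_x => [|c u] _ _ /=.
    have [a' [l' [b' [r' [-> -> ab Eab Eba]]]]] := pos_relation_complement lr.
    by rewrite /= /head_factor (negbTE ab); exists l', r', v; split => //; apply: pe_refl.
  by rewrite /head_factor eqxx; apply: rst_step; apply: step_cat; apply: step_of_rel.
- by case=> [|c u] //= _ _; rewrite /head_factor eqxx; apply: pe_refl.
- move=> x y xy IHxy size_y gen_y.
  have := IHxy (etrans (pe_size xy) size_y) (etrans (pe_gen xy) gen_y).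
  by case: x {xy IHxy} => [|a1 x]; case: y {size_y gen_y} => [|b1 y] //=; apply: head_factor_sym.
- move=> x y z xy IH1 yz IH2 size_x gen_x.
  have size_y : size y = N.+1 by rewrite -(pe_size xy).
  have gen_y : gen_word n y by rewrite -(pe_gen xy).
  move: (IH1 size_x gen_x) (IH2 size_y gen_y).
  case: x xy size_x gen_x {IH1 IH2} => [|a1 x] xy size_x gen_x;
  case: y yz xy size_y gen_y => [|b1 y] yz xy size_y gen_y;
  case: z yz => [|c1 z] yz //=.
  by apply: (head_factor_trans factor_below _ gen_x xy yz); case: size_x.
Qed.

Lemma pe_cancel_cons a U V : gen_word n (a :: U) -> pe (a :: U) (a :: V) -> pe U V.
Proof. by move=> gen_aU /(head_factor_all erefl gen_aU); rewrite /head_factor eqxx. Qed.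

End CubeCondition.

End Reversing.

(** * Checking the cube condition *)

Section CubeCheck.
Variable n : nat.

Definition index_ok i := 1 <= i <= n - 1.

Definition relationb (l r : word) : bool :=
  match l with
  | [:: a; b] => (r == [:: b; a]) && match a, b with
      | Sg i, Sg j | X i, X j => [&& index_ok i, index_ok j & (i.+1 < j) || (j.+1 < i)]
      | X i, Sg j => [&& index_ok i, index_ok j & ~~ adjacent i j]
      | _, _ => false end
  | [:: Sg i; Sg j; c] =>
      [&& j == i.+1, index_ok i, index_ok i.+1 &
         (c == Sg i) && (r == [:: Sg i.+1; Sg i; Sg i.+1])
         || (c == X i) && (r == [:: X i.+1; Sg i; Sg i.+1])]
      || [&& i == j.+1, index_ok j, index_ok i, c == X i & r == [:: X j; Sg i; Sg j]]
  | _ => false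
  end.

Lemma relationb_sound l r : relationb l r -> pos_relation n l r.
Proof.
have far_abs (i j : nat) : (1 < `|(i:int) - (j:int)|%N) = (i.+1 < j) || (j.+1 < i).
  by apply/idP/idP; lia.
have adj_abs (i j : nat) : (`|(i:int) - (j:int)|%N != 1) = ~~ adjacent i j.
  by rewrite /adjacent; apply/idP/idP; lia.
case: l => [|a [|b [|c [|d l]]]] //=; case: a => i //=; try (case: b => j //=).
all: try (case/andP => /eqP -> /and3P [/andP [? ?] /andP [? ?] H];
  first [ by apply: R_ss; rewrite /ok_idx ?far_abs
        | by apply: R_xs; rewrite /ok_idx ?adj_abs
        | by apply: R_xx; rewrite /ok_idx ?far_abs ]).
all: try by case: d.
all: try by rewrite andbF.
case/orP => [/and4P [/eqP ? /andP [? ?] /andP [? ?]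
               /orP [/andP [/eqP ? /eqP ?]|/andP [/eqP ? /eqP ?]]]
            | /and5P [/eqP ? /andP [? ?] /andP [? ?] /eqP ? /eqP ?]]; subst.
- by apply: R_braid.
- by apply: R_sx1.
- by apply: R_sx2.
Qed.

(* Words possibly related to [l] by a defining relation, in either direction. *)
Definition relation_candidates (l : word) : seq word :=
  match l with
  | [:: a; b] => [:: [:: b; a]]
  | [:: a; b; c] => [:: [:: b; a; b]; [:: X (letter_index a).+1; a; b];
                       [:: X (letter_index a).-1; a; b]; [:: b; c; X (letter_index b)]]
  | _ => [::]
  end.

Definition neighbours (w : word) : seq word :=
  flatten [seq flatten [seq [seq take i w ++ r ++ drop L (drop i w)
                              | r <- relation_candidates (take L (drop i w)) &
                                 relationb (take L (drop i w)) r || relationb r (take L (drop i w))]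
                         | L <- [:: 2; 3]]
          | i <- iota 0 (size w)].

Lemma neighbours_sound w y : y \in neighbours w -> pos_eq n w y.
Proof.
case/flatten_mapP => i _ /flatten_mapP [L _] /mapP [r].
rewrite mem_filter => /andP [rel_lr _] ->.
rewrite -{1}(cat_take_drop i w) -{1}(cat_take_drop L (drop i w)).
case/orP: rel_lr => /relationb_sound lr; last apply: pe_sym;
  by apply: rst_step; apply: step_cat; apply: step_of_rel.
Qed.

Fixpoint ball (k : nat) (s : seq word) : seq word :=
  if k is k'.+1 then ball k' (undup (s ++ flatten (map neighbours s))) else s.

Lemma ball_sound k s y : y \in ball k s -> exists2 x, x \in s & pos_eq n x y.
Proof.
elim: k s => [|k IH] s /=; first by move=> ys; exists y => //; apply: pe_refl.
case/IH => x; rewrite mem_undup mem_cat => /orP [xs|/flatten_mapP [z zs xz]] xy.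
  by exists x.
by exists z => //; apply: pe_trans (neighbours_sound xz) xy.
Qed.

Definition pos_eqb (u v : word) := v \in ball 6 [:: u].

Lemma pos_eqb_sound u v : pos_eqb u v -> pos_eq n u v.
Proof. by case/ball_sound => x; rewrite inE => /eqP ->. Qed.

(* The word [s] is found by reversing; both positive equalities are then certified by a
   breadth-first search of depth 6. *)
Definition cube_conditionb (a b c : letter) : bool :=
  (a != b) && (b != c) && (a != c) ==>
  match complement a b, complement b a, complement b c, complement c b with
  | Some pab, Some pba, Some pbc, Some pcb =>
     match reverse 20 pba pbc with
     | NoMultiple => true
     | OutOfFuel => false
     | Reversed p' q' =>
       match complement a c, complement c a with
       | Some r, Some t =>
         if reverse 20 r (pab ++ p') is Reversed s [::]
         then pos_eqb (pab ++ p') (r ++ s) && pos_eqb (pcb ++ q') (t ++ s)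
         else false
       | _, _ => false
       end
     end
  | _, _, _, _ => true
  end.

Lemma cube_conditionb_sound a b c : cube_conditionb a b c -> cube_condition n a b c.
Proof.
rewrite /cube_conditionb /cube_condition => cube ab bc ac pab pba pbc pcb Eab Eba Ebc Ecb.
move: cube; rewrite ab bc ac Eab Eba Ebc Ecb => /implyP /(_ isT); cbv beta iota.
case: (reverse 20 pba pbc) => [p' q'|//|//].
case: (complement a c) => [r|//]; case: (complement c a) => [t|//].
case: (reverse 20 r (pab ++ p')) => [s [|? ?]|//|//] // /andP [pab_rs pcb_ts].
by exists r, t, s; split => //; apply: pos_eqb_sound.
Qed.

End CubeCheck.

(* By [compress] below, indices in [1, 5] are enough to exhibit all the patterns of
   equality and adjacency among three indices. *)
Definition generators6 : seq letter := [seq Sg i | i <- iota 1 5] ++ [seq X i | i <- iota 1 5].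

Lemma cube_conditionb_generators6 :
  all (fun a => all (fun b => all (cube_conditionb 6 a b) generators6) generators6) generators6.
Proof. by vm_compute. Qed.

Definition with_index (a : letter) i := match a with Sg _ => Sg i | Si _ => Si i | X _ => X i end.

Lemma index_with_index a i : letter_index (with_index a i) = i. Proof. by case: a. Qed.

Definition pattern_preserving (h : nat -> nat) (S : seq nat) :=
  {in S &, forall x y, (h x == h y) = (x == y) /\ ((h x).+1 == h y) = (x.+1 == y)}.

Section Relabel.
Variables (n : nat) (h : nat -> nat) (S : seq nat).
Hypothesis h_pattern : pattern_preserving h S.
Hypothesis h_range : {in S, forall x, 1 <= h x <= n - 1}.

Definition relabel (a : letter) := with_index a (h (letter_index a)).
Definition indices_in (w : word) := all (fun a => letter_index a \in S) w.

Lemma indices_in_cat u v : indices_in (u ++ v) = indices_in u && indices_in v.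
Proof. exact: all_cat. Qed.

Lemma pe_indices_in m u v : pos_eq m u v -> indices_in u = indices_in v.
Proof.
apply: cong_invariant => l r x y lr; rewrite !indices_in_cat; congr (_ && (_ && _)).
case: lr => [i j _ _ _|i j _ _ _|i j _ _ _|i _ _|i _ _|i _ _]; rewrite /indices_in /= ?andbT;
  first [by rewrite andbC | by case: (i \in S); case: (i.+1 \in S)].
Qed.

Lemma relabel_eq a b : letter_index a \in S -> letter_index b \in S ->
  (relabel a == relabel b) = (a == b).
Proof.
have Sg_inj : injective Sg by move=> ? ? [].
have Si_inj : injective Si by move=> ? ? [].
have X_inj : injective X by move=> ? ? [].
case: a => i; case: b => j /= Si Sj;
  rewrite ?(inj_eq Sg_inj) ?(inj_eq Si_inj) ?(inj_eq X_inj) //; exact: (h_pattern Si Sj).1.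
Qed.

Lemma adjacent_relabel i j : i \in S -> j \in S -> adjacent (h i) (h j) = adjacent i j.
Proof. by move=> Si Sj; rewrite /adjacent (h_pattern Si Sj).2 (h_pattern Sj Si).2. Qed.

Lemma complement_relabel a b : letter_index a \in S -> letter_index b \in S ->
  complement (relabel a) (relabel b) = omap (map relabel) (complement a b).
Proof. by case: a => i; case: b => j //= Si Sj; rewrite adjacent_relabel //; case: adjacent. Qed.

Lemma complement_indices a b p : letter_index a \in S -> letter_index b \in S ->
  complement a b = Some p -> indices_in p.
Proof.
by case: a => i; case: b => j //= Si Sj; (try case: adjacent) => //= -[<-] /=; rewrite ?Si ?Sj.
Qed.

Definition relabel_reversal (r : reversal) :=
  if r is Reversed x y then Reversed (map relabel x) (map relabel y) else r.
Definition reversal_indices_in (r : reversal) :=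
  if r is Reversed x y then indices_in x && indices_in y else true.

Lemma reverse_relabel k u v : indices_in u -> indices_in v ->
  reverse k (map relabel u) (map relabel v) = relabel_reversal (reverse k u v) /\
  reversal_indices_in (reverse k u v).
Proof.
elim: k u v => [//|k IH] [|a u] v Su Sv; first by split => //=; rewrite andbT.
case/andP: Su => Sa Su; cbn [reverse map].
have reverse_letter_relabel :
    reverse_letter (reverse k) (relabel a) (map relabel v) =
      relabel_reversal (reverse_letter (reverse k) a v) /\
    reversal_indices_in (reverse_letter (reverse k) a v).
  case: v Sv => [|b v] /=; first by split => //=; rewrite andbT.
  case/andP => Sb Sv; rewrite relabel_eq //; case: eqP => _; first by split => //=; rewrite andbT.
  rewrite !complement_relabel //.
  case E1: (complement a b) => [p|] //=; case E2: (complement b a) => [q|] //=.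
  have [-> /=] := IH q v (complement_indices Sb Sa E2) Sv.
  case: (reverse k q v) => [q' w|//|//] /= /andP [Sq' Sw].
  by rewrite map_cat indices_in_cat (complement_indices Sa Sb E1) Sq' Sw.
case: reverse_letter_relabel => -> /=.
case: (reverse_letter (reverse k) a v) => [x y|//|//] /= /andP [Sx Sy].
have [-> /=] := IH u x Su Sx.
case: (reverse k u x) => [x' z|//|//] /= /andP [Sx' Sz].
by rewrite map_cat indices_in_cat Sy Sx' Sz.
Qed.

Lemma pos_relation_relabel l r : pos_relation 6 l r -> indices_in l ->
  pos_relation n (map relabel l) (map relabel r).
Proof.
have ok_h x : x \in S -> ok_idx n (h x) by move/h_range/andP.
have far_abs (i j : nat) : (1 < `|(i : int) - (j : int)|%N) = (i != j) && ~~ adjacent i j.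
  by rewrite /adjacent; apply/idP/idP; lia.
have adj_abs (i j : nat) : (`|(i : int) - (j : int)|%N != 1) = ~~ adjacent i j.
  by rewrite /adjacent; apply/idP/idP; lia.
have succ_h i : i \in S -> i.+1 \in S -> h i.+1 = (h i).+1.
  by move=> Si Si1; apply/esym/eqP; rewrite (h_pattern Si Si1).2.
case=> [i j _ _ far|i j _ _ far|i j _ _ nadj|i _ _|i _ _|i _ _]; rewrite /indices_in /=.
- case/and3P => Si Sj _; apply: R_ss; try exact: ok_h.
  by rewrite far_abs (h_pattern Si Sj).1 adjacent_relabel // -far_abs.
- case/and3P => Si Sj _; apply: R_xx; try exact: ok_h.
  by rewrite far_abs (h_pattern Si Sj).1 adjacent_relabel // -far_abs.
- case/and3P => Si Sj _; apply: R_xs; try exact: ok_h.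
  by rewrite adj_abs adjacent_relabel // -adj_abs.
- case/and4P => Si Si1 _ _; rewrite succ_h //.
  by apply: R_braid; rewrite -?succ_h //; apply: ok_h.
- case/and4P => Si Si1 _ _; rewrite succ_h //.
  by apply: R_sx1; rewrite -?succ_h //; apply: ok_h.
- case/and4P => Si1 Si _ _; rewrite succ_h //.
  by apply: R_sx2; rewrite -?succ_h //; apply: ok_h.
Qed.

Lemma pe_relabel u v : pos_eq 6 u v -> indices_in u ->
  pos_eq n (map relabel u) (map relabel v).
Proof.
elim=> {u v} [x y [u [v [l [r [lr [-> ->]]]]]]|x|x y xy IH|x y z xy IH1 yz IH2] Sx.
- rewrite !map_cat; apply/pe_catl/pe_catr/pe_rel; apply: pos_relation_relabel lr _.
  by move: Sx; rewrite !indices_in_cat => /and3P [].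
- exact: pe_refl.
- by apply/pe_sym/IH; rewrite (pe_indices_in xy).
- by apply: pe_trans (IH1 Sx) (IH2 _); rewrite -(pe_indices_in xy).
Qed.

Lemma cube_condition_relabel a b c :
  letter_index a \in S -> letter_index b \in S -> letter_index c \in S ->
  cube_condition 6 a b c -> cube_condition n (relabel a) (relabel b) (relabel c).
Proof.
have omap_some (f : word -> word) o p : omap f o = Some p -> exists2 p', o = Some p' & p = f p'.
  by case: o => [p'|] //= [<-]; exists p'.
move=> Sa Sb Sc cube; rewrite /cube_condition !relabel_eq // => ab bc ac pab pba pbc pcb.
rewrite !complement_relabel // => /omap_some [pab' Eab ->] /omap_some [pba' Eba ->]
  /omap_some [pbc' Ebc ->] /omap_some [pcb' Ecb ->].
have := cube ab bc ac _ _ _ _ Eab Eba Ebc Ecb.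
have [-> ] := reverse_relabel 20 (complement_indices Sb Sa Eba) (complement_indices Sb Sc Ebc).
case: (reverse 20 pba' pbc') => [p' q'|//|//] /= /andP [Sp' Sq'] [r [t [s [Er Et pab_rs pcb_ts]]]].
exists (map relabel r), (map relabel t), (map relabel s); split.
- by rewrite Er.
- by rewrite Et.
- rewrite -!map_cat; apply: pe_relabel pab_rs _.
  by rewrite indices_in_cat Sp' (complement_indices Sa Sb Eab).
- rewrite -!map_cat; apply: pe_relabel pcb_ts _.
  by rewrite indices_in_cat Sq' (complement_indices Sc Sb Ecb).
Qed.

End Relabel.

Definition same_pattern (x y x' y' : nat) : Prop :=
  (x = y <-> x' = y') /\ (x.+1 = y <-> x'.+1 = y') /\ (y.+1 = x <-> y'.+1 = x').

Lemma same_pattern_sym x y x' y' : same_pattern x y x' y' -> same_pattern y x y' x'.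
Proof. rewrite /same_pattern; lia. Qed.

Definition small x := 1 <= x <= 5.

Lemma compress_sorted p q r : p <= q -> q <= r -> exists p' q' r',
  [/\ [&& small p', small q' & small r'],
      same_pattern p q p' q', same_pattern q r q' r' & same_pattern p r p' r'].
Proof.
move=> pq qr; rewrite /same_pattern /small.
have [dpq|dpq] := leqP (q - p) 1; have [dqr|dqr] := leqP (r - q) 1.
- by exists 1, (1 + (q - p)), (1 + (q - p) + (r - q)); split; lia.
- by exists 1, (1 + (q - p)), (1 + (q - p) + 2); split; lia.
- by exists 1, 3, (3 + (r - q)); split; lia.
- by exists 1, 3, 5; split; lia.
Qed.

Lemma compress i j k : exists i' j' k',
  [/\ [&& small i', small j' & small k'],
      same_pattern i j i' j', same_pattern j k j' k' & same_pattern i k i' k'].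
Proof.
have small_perm x y z : [&& small x, small y & small z] -> [&& small y, small x & small z]
    /\ [&& small z, small x & small y] /\ [&& small x, small z & small y]
    /\ [&& small y, small z & small x] /\ [&& small z, small y & small x].
  by rewrite /small; lia.
have sym := same_pattern_sym.
case: (leqP i j) => ij; case: (leqP j k) => jk; case: (leqP i k) => ik; try lia.
- have [x [y [z [? ? ? ?]]]] := compress_sorted ij jk; by exists x, y, z.
- have [x [z [y [/small_perm[_ [_ [? _]]] ? ? ?]]]] := compress_sorted ik (ltnW jk).
  by exists x, y, z; split; auto.
- have [z [x [y [/small_perm[_ [_ [_ [? _]]]] ? ? ?]]]] := compress_sorted (ltnW ik) ij.
  by exists x, y, z; split; auto.
- have [y [x [z [/small_perm[? _] ? ? ?]]]] := compress_sorted (ltnW ij) ik.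
  by exists x, y, z; split; auto.
- have [y [z [x [/small_perm[_ [? _]] ? ? ?]]]] := compress_sorted jk (ltnW ik).
  by exists x, y, z; split; auto.
- have [z [y [x [/small_perm[_ [_ [_ [_ ?]]]] ? ? ?]]]] := compress_sorted (ltnW jk) (ltnW ij).
  by exists x, y, z; split; auto.
Qed.

Lemma pattern_relabel i j k i' j' k' :
  same_pattern i j i' j' -> same_pattern j k j' k' -> same_pattern i k i' k' ->
  exists h : nat -> nat, [/\ h i' = i, h j' = j, h k' = k &
    pattern_preserving h [:: i'; j'; k']].
Proof.
move=> Pij Pjk Pik.
pose h x := if x == i' then i else if x == j' then j else k.
have hi : h i' = i by rewrite /h eqxx.
have hj : h j' = j.
  by rewrite /h; case: eqP => [E|_]; [case: Pij => P _; apply: P.2; rewrite E | rewrite eqxx].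
have hk : h k' = k.
  rewrite /h; case: eqP => [E|_]; first by case: Pik => P _; apply: P.2; rewrite E.
  by case: eqP => [E|_] //; case: Pjk => P _; apply: P.2; rewrite E.
exists h; split => // x y.
have pattern_eq x0 y0 x1 y1 : same_pattern x0 y0 x1 y1 ->
    (x0 == y0) = (x1 == y1) /\ (x0.+1 == y0) = (x1.+1 == y1).
  by case=> [E1 [E2 _]]; split; apply/eqP/eqP; tauto.
have refl x0 x1 : same_pattern x0 x0 x1 x1 by rewrite /same_pattern; lia.
have sym := same_pattern_sym.
rewrite !inE => /or3P[] /eqP -> /or3P[] /eqP ->; rewrite ?hi ?hj ?hk; apply: pattern_eq; auto.
Qed.

Lemma cube_condition_all n a b c :
  generator n a -> generator n b -> generator n c -> cube_condition n a b c.
Proof.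
move=> ga gb gc.
have [i' [j' [k' [/and3P[si sj sk] Pij Pjk Pik]]]] :=
  compress (letter_index a) (letter_index b) (letter_index c).
have [h [hi hj hk h_pattern]] := pattern_relabel Pij Pjk Pik.
have h_range : {in [:: i'; j'; k'], forall x, 1 <= h x <= n - 1}.
  move=> x; rewrite !inE => /or3P[] /eqP ->; rewrite ?hi ?hj ?hk.
  - by case/andP: ga.
  - by case/andP: gb.
  - by case/andP: gc.
have relabelK d x : h x = letter_index d -> relabel h (with_index d x) = d.
  by rewrite /relabel index_with_index => ->; case: d.
rewrite -(relabelK a i') // -(relabelK b j') // -(relabelK c k') //.
apply: (cube_condition_relabel h_pattern h_range); rewrite ?index_with_index ?inE ?eqxx ?orbT //.
apply: cube_conditionb_sound.
have in6 d x : positive_letter d -> small x -> with_index d x \in generators6.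
  case: d => //= _ _ /andP[x1 x5]; rewrite mem_cat; apply/orP; [left|right];
    by apply/mapP; exists x => //; rewrite mem_iota; lia.
by move: cube_conditionb_generators6 => /allP/(_ _ (in6 a i' (proj1 (andP ga)) si))
  /allP/(_ _ (in6 b j' (proj1 (andP gb)) sj))/allP/(_ _ (in6 c k' (proj1 (andP gc)) sk)).
Qed.

Lemma pe_cancell n q U V : gen_word n (q ++ U) -> pos_eq n (q ++ U) (q ++ V) -> pos_eq n U V.
Proof.
elim: q => [//|a q IHq] /= gen_aqU aqU_aqV; apply: IHq; first by case/andP: gen_aqU.
exact: (pe_cancel_cons (@cube_condition_all n)) gen_aqU aqU_aqV.
Qed.

Lemma pos_relation_rev n l r : pos_relation n l r ->
  pos_relation n (rev l) (rev r) \/ pos_relation n (rev r) (rev l).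
Proof.
case=> [i j oi oj far|i j oi oj far|i j oi oj nadj|i oi oi1|i oi oi1|i oi oi1]; rewrite /rev /=.
- by left; apply: R_ss => //; move: far; lia.
- by left; apply: R_xx => //; move: far; lia.
- by right; apply: R_xs.
- by left; apply: R_braid.
- by right; apply: R_sx2.
- by right; apply: R_sx1.
Qed.

Lemma pe_rev n u v : pos_eq n u v -> pos_eq n (rev u) (rev v).
Proof.
apply: rst_map => _ _ [x [y [l [r [lr [-> ->]]]]]].
rewrite !rev_cat -!catA; case: (pos_relation_rev lr) => [rlr|rrl];
  [|apply: rst_sym]; by apply: rst_step; apply: step_cat; apply: step_of_rel.
Qed.

Lemma pe_cancelr n q U V : gen_word n (U ++ q) -> pos_eq n (U ++ q) (V ++ q) -> pos_eq n U V.
Proof.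
move=> gen_Uq /pe_rev; rewrite !rev_cat => Uq_Vq.
have gen_qU : gen_word n (rev q ++ rev U) by rewrite -rev_cat /gen_word all_rev.
by rewrite -(revK U) -(revK V); apply: pe_rev; apply: pe_cancell gen_qU Uq_Vq.
Qed.

(** * The Garside word *)

Definition sigma_or_x (b : bool) i := if b then X i else Sg i.
Definition ascending k := map Sg (iota 1 k).
Definition descending k := rev (ascending k).
Definition garside m := flatten [seq ascending k | k <- rev (iota 1 m)].
Definition sigma_word m (w : word) := all (fun c => if c is Sg l then 1 <= l <= m else false) w.

Lemma Delta_garside n : Delta n = garside (n - 1).
Proof.
rewrite /Delta /garside; congr flatten; apply: eq_map => k.
by rewrite /ascending (iotaDl 1 0) -map_comp; apply: eq_map => x /=; rewrite add1n.
Qed.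

Lemma garsideS m : garside m.+1 = ascending m.+1 ++ garside m.
Proof. by rewrite /garside; have := iotaD 1 m 1; rewrite addn1 add1n => ->; rewrite rev_cat. Qed.

Lemma ascendingS m : ascending m.+1 = ascending m ++ [:: Sg m.+1].
Proof. by rewrite /ascending; have := iotaD 1 m 1; rewrite addn1 add1n => ->; rewrite map_cat. Qed.

Lemma descendingS m : descending m.+1 = Sg m.+1 :: descending m.
Proof. by rewrite /descending ascendingS rev_cat. Qed.

Lemma sigma_word_ascending m : sigma_word m (ascending m).
Proof. by apply/allP => c /mapP [x]; rewrite mem_iota => x_m ->; lia. Qed.

Lemma sigma_word_garside m : sigma_word m (garside m).
Proof.
elim: m => [//|m IH]; rewrite garsideS /sigma_word all_cat.
apply/andP; split; first exact: (sigma_word_ascending m.+1).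
by apply: sub_all IH => -[] // l; lia.
Qed.

Lemma sigma_word_gen n m w : m <= n - 1 -> sigma_word m w -> gen_word n w.
Proof. by move=> mn; apply: sub_all => -[] // l /=; rewrite /generator /=; lia. Qed.

Section Garside.
Variable n : nat.
Local Notation pe := (pos_eq n).

Lemma pe_far_comm b i l : 1 <= i <= n - 1 -> 1 <= l <= n - 1 -> (l.+1 < i) || (i.+1 < l) ->
  pe [:: sigma_or_x b i; Sg l] [:: Sg l; sigma_or_x b i].
Proof.
move=> /andP[? ?] /andP[? ?] far; apply: pe_rel; case: b => /=.
  by apply: R_xs; rewrite /ok_idx; lia.
by apply: R_ss; rewrite /ok_idx; lia.
Qed.

Lemma pe_comm_word a w : (forall c, c \in w -> pe [:: a; c] [:: c; a]) -> pe (a :: w) (w ++ [:: a]).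
Proof.
elim: w => [|c w IH] comm /=; first exact: pe_refl.
apply: pe_trans (_ : pe (c :: a :: w) _); first exact: (pe_catr w (comm c (mem_head _ _))).
by apply: (pe_catl [:: c]); apply: IH => d dw; apply: comm; rewrite inE dw orbT.
Qed.

Lemma pe_comm_sigma_word b t m w : 1 <= t <= n - 1 -> m.+2 <= t -> sigma_word m w ->
  pe (w ++ [:: sigma_or_x b t]) (sigma_or_x b t :: w).
Proof.
move=> t_ok mt low_w; apply/pe_sym/pe_comm_word => c cw.
by move: (allP low_w c cw); case: c cw => // l _ l_ok; apply: pe_far_comm; lia.
Qed.

Lemma pe_braid_sigma_or_x b j : 1 <= j -> j.+1 <= n - 1 ->
  pe [:: Sg j; Sg j.+1; sigma_or_x b j] [:: sigma_or_x b j.+1; Sg j; Sg j.+1].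
Proof.
by move=> ? ?; apply: pe_rel; case: b; [apply: R_sx1 | apply: R_braid]; rewrite /ok_idx; lia.
Qed.

Lemma pe_ascending_shift b j k : 1 <= j -> j < k -> k <= n - 1 ->
  pe (ascending k ++ [:: sigma_or_x b j]) (sigma_or_x b j.+1 :: ascending k).
Proof.
move=> j1; elim: k => [//|k IH] jk kn.
case: (ltngtP j k) => [jk'|//|jk']; [|lia|].
- rewrite ascendingS -catA /=.
  apply: pe_trans (_ : pe (ascending k ++ [:: sigma_or_x b j; Sg k.+1]) _).
    by apply/pe_catl/pe_sym/pe_far_comm; lia.
  rewrite -[[:: sigma_or_x b j; _]]/([:: sigma_or_x b j] ++ [:: Sg k.+1]) catA.
  by apply: pe_trans (pe_catr _ (IH jk' _)) _; [lia | apply: pe_refl].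
- subst k; case: j j1 IH jk kn => [//|j] _ _ _ kn; rewrite !ascendingS -!catA /=.
  apply: pe_trans (pe_catl _ (pe_braid_sigma_or_x b _ _)) _; try lia.
  change (pe (ascending j ++ [:: sigma_or_x b j.+2] ++ [:: Sg j.+1; Sg j.+2])
             ([:: sigma_or_x b j.+2] ++ ascending j ++ [:: Sg j.+1; Sg j.+2])).
  rewrite !catA; apply: pe_catr; apply: (@pe_comm_sigma_word b j.+2 j); [lia | lia |].
  exact: sigma_word_ascending.
Qed.

Lemma pe_descending_shift b j k : 1 <= j -> j < k -> k <= n - 1 ->
  pe (descending k ++ [:: sigma_or_x b j.+1]) (sigma_or_x b j :: descending k).
Proof.
move=> j1 jk kn; have := pe_rev (pe_ascending_shift b j1 jk kn).
by rewrite rev_cat /= rev_cons -cats1 => /pe_sym.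
Qed.

Lemma pe_garside_descending m : m.+1 <= n - 1 -> pe (garside m.+1) (garside m ++ descending m.+1).
Proof.
elim: m => [|m IH] mn; first exact: pe_refl.
apply: pe_sym.
have -> : garside m.+1 ++ descending m.+2 =
    ascending m.+1 ++ (garside m ++ [:: sigma_or_x false m.+2]) ++ descending m.+1.
  by rewrite garsideS descendingS -!catA.
have comm := @pe_comm_sigma_word false m.+2 m _ _ _ (sigma_word_garside m).
apply: pe_trans (pe_catl _ (pe_catr _ (comm _ _))) _; try lia.
rewrite [garside m.+2]garsideS [ascending m.+2]ascendingS -catA.
by apply/(pe_catl (ascending m.+1))/(pe_catl [:: Sg m.+2])/pe_sym/IH; lia.
Qed.

Lemma pe_garside_sigma_or_x m b i : m <= n - 1 -> 1 <= i <= m ->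
  pe (garside m ++ [:: sigma_or_x b i]) (sigma_or_x b (m.+1 - i) :: garside m).
Proof.
elim: m i => [|m IH] i mn im; first lia.
case: (ltngtP i m.+1) => [im'|//|->]; [|lia|].
- rewrite garsideS -catA; apply: pe_trans (pe_catl _ (IH i _ _)) _; try lia.
  rewrite -[sigma_or_x b (m.+1 - i) :: _]cat1s catA.
  apply: pe_trans (pe_catr _ (pe_ascending_shift _ _ _ _)) _; try lia.
  have -> : (m.+1 - i).+1 = m.+2 - i by lia.
  exact: pe_refl.
- rewrite subSnn; have [->|m0] := eqVneq m 0.
    case: b {IH} => /=; last exact: pe_refl.
    by apply/pe_sym/pe_rel/R_xs; rewrite /ok_idx; lia.
  apply: pe_trans (pe_catr _ (pe_garside_descending _)) _; first lia.
  rewrite -catA; apply: pe_trans (pe_catl _ (pe_descending_shift _ _ _ _)) _; try lia.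
  rewrite -[sigma_or_x b m :: _]cat1s catA.
  apply: pe_trans (pe_catr _ (IH m _ _)) _; try lia.
  by rewrite subSnn; apply/(pe_catl [:: sigma_or_x b 1])/pe_sym/pe_garside_descending; lia.
Qed.

Fixpoint garside_cofactor m i : word :=
  if m is m'.+1 then
    if i == 1 then garside m' ++ rev (map Sg (iota 2 m'))
    else garside_cofactor m' i.-1 ++ descending m
  else [::].

Lemma pe_garside_cofactor m i : m <= n - 1 -> 1 <= i <= m ->
  pe (garside m) (garside_cofactor m i ++ [:: Sg i]).
Proof.
elim: m i => [|m IH] i mn im; first lia.
apply: pe_trans (pe_garside_descending mn) _ => /=.
case: eqP => [->|i1].
  by rewrite /descending /ascending /= rev_cons -cats1 catA; apply: pe_refl.
apply: pe_trans (pe_catr _ (IH i.-1 (ltnW mn) _)) _; first lia.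
rewrite -!catA; apply: pe_catl.
have := @pe_descending_shift false i.-1 m.+1 _ _ mn; rewrite prednK; last lia.
by move=> shift; apply/pe_sym/shift; lia.
Qed.

End Garside.

(** * Conjugation by Delta *)

Section DeltaConjugation.
Variable n : nat.
Local Notation pe := (pos_eq n).
Local Notation Delta := (Delta n).

Definition tau (a : letter) := with_index a (n - letter_index a).

Lemma gen_Delta : gen_word n Delta.
Proof. by rewrite Delta_garside; apply: sigma_word_gen (sigma_word_garside _). Qed.

Lemma gen_tau w : gen_word n w -> gen_word n (map tau w).
Proof.
move=> gen_w; apply/allP => _ /mapP [a aw ->]; move: (allP gen_w a aw).
by case: a {aw} => //= i; rewrite /generator /=; lia.
Qed.

Lemma pe_Delta_letter a : generator n a -> pe (Delta ++ [:: a]) (tau a :: Delta).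
Proof.
case: a => // i /andP[_ /= i_ok]; rewrite Delta_garside /tau /=;
  have -> : n - i = (n - 1).+1 - i by lia.
- exact: (pe_garside_sigma_or_x false (leqnn _) i_ok).
- exact: (pe_garside_sigma_or_x true (leqnn _) i_ok).
Qed.

Lemma pe_Delta_word w : gen_word n w -> pe (Delta ++ w) (map tau w ++ Delta).
Proof.
elim: w => [|a w IH] /=; first by rewrite cats0 => _; apply: pe_refl.
case/andP=> ga gen_w; rewrite -cat1s catA; apply: pe_trans (pe_catr _ (pe_Delta_letter ga)) _.
exact: (pe_catl [:: tau a] (IH gen_w)).
Qed.

Lemma pos_relation_tau l r : pos_relation n l r ->
  pos_relation n (map tau l) (map tau r) \/ pos_relation n (map tau r) (map tau l).
Proof.
rewrite /tau; case=> [i j [? ?] [? ?] far|i j [? ?] [? ?] far|i j [? ?] [? ?] nadj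
  |i [? ?] [? ?]|i [? ?] [? ?]|i [? ?] [? ?]] /=.
- by left; apply: R_ss; rewrite /ok_idx; lia.
- by left; apply: R_xx; rewrite /ok_idx; lia.
- by left; apply: R_xs; rewrite /ok_idx; lia.
- have -> : n - i = (n - i.+1).+1 by lia.
  by right; apply: R_braid; rewrite /ok_idx; lia.
- have -> : n - i = (n - i.+1).+1 by lia.
  by left; apply: R_sx2; rewrite /ok_idx; lia.
- have -> : n - i = (n - i.+1).+1 by lia.
  by left; apply: R_sx1; rewrite /ok_idx; lia.
Qed.

Lemma pe_tau u v : pe u v -> pe (map tau u) (map tau v).
Proof.
apply: rst_map => _ _ [x [y [l [r [lr [-> ->]]]]]].
rewrite !map_cat; case: (pos_relation_tau lr) => [tlr|trl];
  [|apply: rst_sym]; by apply: rst_step; apply: step_cat; apply: step_of_rel.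
Qed.

Lemma pe_tau_Delta : pe (map tau Delta) Delta.
Proof.
apply/pe_sym/(pe_cancelr (q := Delta)); last exact: pe_Delta_word gen_Delta.
by rewrite gen_word_cat gen_Delta.
Qed.

Definition Delta_pown j := flatten (nseq j Delta).

Lemma Delta_pownD a b : Delta_pown (a + b) = Delta_pown a ++ Delta_pown b.
Proof. by rewrite /Delta_pown nseqD flatten_cat. Qed.

Lemma Delta_pownS j : Delta_pown j.+1 = Delta ++ Delta_pown j.
Proof. by []. Qed.

Lemma Delta_pown1 : Delta_pown 1 = Delta.
Proof. by rewrite /Delta_pown /= cats0. Qed.

Lemma Delta_pownSr j : Delta_pown j.+1 = Delta_pown j ++ Delta.
Proof. by rewrite -addn1 Delta_pownD /Delta_pown /= cats0. Qed.

Lemma gen_Delta_pown j : gen_word n (Delta_pown j).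
Proof. by elim: j => [//|j IH]; rewrite /= gen_word_cat gen_Delta. Qed.

Lemma map_iter_tauD a b w : map (iter a tau) (map (iter b tau) w) = map (iter (a + b) tau) w.
Proof. by rewrite -map_comp; apply: eq_map => x /=; rewrite iterD. Qed.

Lemma gen_iter_tau k w : gen_word n w -> gen_word n (map (iter k tau) w).
Proof.
elim: k => [|k IH] gen_w; first by rewrite map_id_in.
by rewrite -(map_iter_tauD 1 k); apply/gen_tau/IH.
Qed.

Lemma pe_iter_tau k u v : pe u v -> pe (map (iter k tau) u) (map (iter k tau) v).
Proof.
elim: k => [|k IH] uv; first by rewrite !map_id_in.
by rewrite -!(map_iter_tauD 1 k); apply/pe_tau/IH.
Qed.

Lemma pe_iter_tau_Delta_pown k j : pe (map (iter k tau) (Delta_pown j)) (Delta_pown j).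
Proof.
have tau_Delta : pe (map (iter k tau) Delta) Delta.
  elim: k => [|k IH]; first by rewrite map_id_in //; apply: pe_refl.
  by rewrite -(map_iter_tauD 1 k); apply: pe_trans (pe_tau IH) pe_tau_Delta.
by elim: j => [|j IH]; [apply: pe_refl | rewrite /= map_cat; apply: pe_cat].
Qed.

Lemma pe_Delta_pown_word j w : gen_word n w ->
  pe (Delta_pown j ++ w) (map (iter j tau) w ++ Delta_pown j).
Proof.
elim: j w => [|j IH] w gen_w; first by rewrite map_id_in // cats0; apply: pe_refl.
rewrite /= -catA; apply: pe_trans (pe_catl _ (IH _ gen_w)) _.
rewrite catA; apply: pe_trans (pe_catr _ (pe_Delta_word (gen_iter_tau j gen_w))) _.
by rewrite -catA (map_iter_tauD 1 j); apply: pe_refl.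
Qed.

Definition Delta_cofactor i := garside_cofactor (n - 1) i.

Lemma pe_Delta_cofactor i : 1 <= i <= n - 1 -> pe Delta (Delta_cofactor i ++ [:: Sg i]).
Proof. by rewrite Delta_garside; apply: pe_garside_cofactor. Qed.

Lemma gen_Delta_cofactor i : 1 <= i <= n - 1 -> gen_word n (Delta_cofactor i).
Proof.
move/pe_Delta_cofactor/pe_gen; rewrite gen_Delta gen_word_cat.
by case/esym/andP.
Qed.

End DeltaConjugation.

(** * Fractions in SB_n *)

Section Fractions.
Variable n : nat.
Local Notation pe := (pos_eq n).
Local Notation sbe := (sb_eq n).
Local Notation Delta := (Delta n).
Local Notation Delta_inv := (Delta_inv n).
Local Notation tau := (tau n).

Lemma sbe_refl w : sbe w w. Proof. exact: rst_refl. Qed.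
Lemma sbe_sym u v : sbe u v -> sbe v u. Proof. exact: rst_sym. Qed.
Lemma sbe_trans u v w : sbe u v -> sbe v w -> sbe u w. Proof. exact: rst_trans. Qed.
Lemma sbe_cat a b c d : sbe a b -> sbe c d -> sbe (a ++ c) (b ++ d). Proof. exact: cong_cat. Qed.
Lemma sbe_catl a c d : sbe c d -> sbe (a ++ c) (a ++ d). Proof. exact/sbe_cat/sbe_refl. Qed.
Lemma sbe_catr a b c : sbe a b -> sbe (a ++ c) (b ++ c).
Proof. by move/sbe_cat; apply; apply: sbe_refl. Qed.
Lemma sbe_rel l r : sb_relation n l r -> sbe l r.
Proof. by move=> lr; apply: rst_step; apply: step_of_rel. Qed.

Lemma pe_sbe u v : pe u v -> sbe u v.
Proof.
apply: (rst_map (g := id)) => _ _ [x [y [l [r [lr [-> ->]]]]]].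
by apply: rst_step; apply: step_cat; apply: step_of_rel; apply: R_pos.
Qed.

Lemma sbe_sigma_word_inv w : sigma_word (n - 1) w ->
  sbe (w ++ rev (map inv_letter w)) [::] /\ sbe (rev (map inv_letter w) ++ w) [::].
Proof.
elim: w => [|a w IH] /=; first by split; apply: sbe_refl.
case: a => // i /andP [i_ok low_w]; have [ww' w'w] := IH low_w.
have ok_i : ok_idx n i by rewrite /ok_idx; lia.
rewrite rev_cons -cats1; split.
  apply: sbe_trans (_ : sbe ([:: Sg i] ++ [:: Si i]) _); last exact: sbe_rel (R_inv1 ok_i).
  by rewrite catA; apply: (sbe_catl [:: Sg i]); apply: (sbe_catr [:: Si i] ww').
rewrite -catA; apply: sbe_trans w'w; apply: sbe_catl.
exact: (sbe_catr w (sbe_rel (R_inv2 ok_i))).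
Qed.

Lemma sbe_Delta_Delta_inv : sbe (Delta ++ Delta_inv) [::].
Proof.
by rewrite /Delta_inv Delta_garside; apply: (sbe_sigma_word_inv (sigma_word_garside _)).1.
Qed.

Lemma sbe_Delta_inv_Delta : sbe (Delta_inv ++ Delta) [::].
Proof.
by rewrite /Delta_inv Delta_garside; apply: (sbe_sigma_word_inv (sigma_word_garside _)).2.
Qed.

Definition Delta_inv_pown k := flatten (nseq k Delta_inv).

Lemma Delta_inv_pownD a b : Delta_inv_pown (a + b) = Delta_inv_pown a ++ Delta_inv_pown b.
Proof. by rewrite /Delta_inv_pown nseqD flatten_cat. Qed.

Lemma Delta_inv_pownSr k : Delta_inv_pown k.+1 = Delta_inv_pown k ++ Delta_inv.
Proof. by rewrite -addn1 Delta_inv_pownD /Delta_inv_pown /= cats0. Qed.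

Lemma sbe_Delta_pown_inv k : sbe (Delta_pown n k ++ Delta_inv_pown k) [::].
Proof.
elim: k => [|k IH]; first exact: sbe_refl.
rewrite Delta_pownSr -catA (catA Delta).
by apply: sbe_trans (sbe_catl _ (sbe_catr _ sbe_Delta_Delta_inv)) _.
Qed.

Lemma sbe_Delta_inv_pown k : sbe (Delta_inv_pown k ++ Delta_pown n k) [::].
Proof.
elim: k => [|k IH]; first exact: sbe_refl.
rewrite Delta_inv_pownSr -catA (catA Delta_inv).
by apply: sbe_trans (sbe_catl _ (sbe_catr _ sbe_Delta_inv_Delta)) _.
Qed.

Lemma sbe_word_Delta_inv w : gen_word n w -> sbe (w ++ Delta_inv) (Delta_inv ++ map tau w).
Proof.
move=> gen_w.
apply: sbe_trans (_ : sbe ((Delta_inv ++ Delta) ++ w ++ Delta_inv) _).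
  exact: sbe_catr (sbe_sym sbe_Delta_inv_Delta).
rewrite -catA (catA Delta).
apply: sbe_trans (sbe_catl _ (sbe_catr _ (pe_sbe (pe_Delta_word gen_w)))) _.
rewrite -catA; apply: sbe_catl.
by have := sbe_catl (map tau w) sbe_Delta_Delta_inv; rewrite cats0.
Qed.

Lemma sbe_word_Delta_inv_pown k w : gen_word n w ->
  sbe (w ++ Delta_inv_pown k) (Delta_inv_pown k ++ map (iter k tau) w).
Proof.
elim: k w => [|k IH] w gen_w; first by rewrite map_id_in // cats0; apply: sbe_refl.
rewrite -[Delta_inv_pown k.+1]/(Delta_inv ++ Delta_inv_pown k) catA.
apply: sbe_trans (sbe_catr _ (sbe_word_Delta_inv gen_w)) _.
have -> : map (iter k.+1 tau) w = map (iter k tau) (map tau w).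
  by rewrite (map_iter_tauD n k 1) addn1.
by rewrite -!catA; apply/sbe_catl/IH/gen_tau.
Qed.

Lemma sbe_Si i : 1 <= i <= n - 1 -> sbe [:: Si i] (Delta_inv ++ Delta_cofactor n i).
Proof.
move=> i_ok; have ok_i : ok_idx n i by rewrite /ok_idx; lia.
apply: sbe_sym.
apply: sbe_trans (_ : sbe (Delta_inv ++ (Delta_cofactor n i ++ [:: Sg i]) ++ [:: Si i]) _).
  rewrite -catA; apply/sbe_catl/sbe_sym.
  by have := sbe_catl (Delta_cofactor n i) (sbe_rel (R_inv1 ok_i)); rewrite cats0.
apply: sbe_trans (sbe_catl _ (sbe_catr _ (pe_sbe (pe_sym (pe_Delta_cofactor i_ok))))) _.
by rewrite catA; apply: sbe_catr sbe_Delta_inv_Delta.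
Qed.

(* A pair [(k, P)] stands for [Delta^-k P]; since [P Delta^-l = Delta^-l tau^l(P)],
   such pairs are closed under [frac_mul]. *)
Definition frac_mul (x y : nat * word) := (x.1 + y.1, map (iter y.1 tau) x.2 ++ y.2).
Definition frac_of_letter (a : letter) :=
  if a is Si i then (1, Delta_cofactor n i) else (0, [:: a]).
Fixpoint fraction (w : word) :=
  if w is a :: w' then frac_mul (frac_of_letter a) (fraction w') else (0, [::]).

Lemma gen_fraction w : valid_word n w -> gen_word n (fraction w).2.
Proof.
elim: w => [//|a w IH] /andP [a_ok w_ok] /=; rewrite gen_word_cat IH // andbT.
apply: gen_iter_tau; case: a a_ok => i i_ok /=; rewrite /gen_word /generator /= ?i_ok //.
exact: gen_Delta_cofactor.
Qed.

Lemma sbe_fraction w : valid_word n w -> sbe w (Delta_inv_pown (fraction w).1 ++ (fraction w).2).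
Proof.
elim: w => [|a w IH] /=; first by move=> _; apply: sbe_refl.
move=> /andP [a_ok /IH]; case: (fraction w) => k P /= wP.
apply: sbe_trans (sbe_catl [:: a] wP) _.
have gen_a i : 1 <= i <= n - 1 -> gen_word n [:: Sg i] /\ gen_word n [:: X i].
  by rewrite /gen_word /generator /= andbT => ->.
case: a a_ok => i i_ok /=.
- rewrite add0n -[Sg i :: _]cat1s catA -[iter k tau _ :: P]cat1s catA.
  exact/sbe_catr/sbe_word_Delta_inv_pown/(gen_a i i_ok).1.
- rewrite add1n /= -catA (catA Delta_inv); apply: sbe_trans (sbe_catr _ (sbe_Si i_ok)) _.
  rewrite -!catA; apply: sbe_catl; rewrite !catA; apply: sbe_catr.
  exact/sbe_word_Delta_inv_pown/gen_Delta_cofactor.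
- rewrite add0n -[X i :: _]cat1s catA -[iter k tau _ :: P]cat1s catA.
  exact/sbe_catr/sbe_word_Delta_inv_pown/(gen_a i i_ok).2.
Qed.

End Fractions.

Section FractionEquivalence.
Variable n : nat.
Local Notation pe := (pos_eq n).
Local Notation Delta_pown := (Delta_pown n).
Local Notation frac_mul := (frac_mul n).
Local Notation fraction := (fraction n).

Definition frac_equiv (x y : nat * word) := pe (Delta_pown y.1 ++ x.2) (Delta_pown x.1 ++ y.2).

Lemma Delta_pownC a b : Delta_pown a ++ Delta_pown b = Delta_pown b ++ Delta_pown a.
Proof. by rewrite -!Delta_pownD addnC. Qed.

Lemma frac_equiv_trans x y z : gen_word n x.2 -> frac_equiv x y -> frac_equiv y z -> frac_equiv x z.
Proof.
case: x y z => k1 P1 [k2 P2] [k3 P3] /= gen_P1 xy yz; rewrite /frac_equiv /= in xy yz *.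
apply: (@pe_cancell n (Delta_pown k2)); first by rewrite !gen_word_cat !gen_Delta_pown.
rewrite catA Delta_pownC -catA; apply: pe_trans (pe_catl _ xy) _.
rewrite catA Delta_pownC -catA; apply: pe_trans (pe_catl _ yz) _.
by rewrite catA Delta_pownC -catA; apply: pe_refl.
Qed.

Lemma frac_equiv_mulr x y z : frac_equiv x y -> frac_equiv (frac_mul x z) (frac_mul y z).
Proof.
case: x y z => k1 P1 [k2 P2] [k P] /= xy; rewrite /frac_equiv /= in xy *.
have := pe_iter_tau k xy; rewrite !map_cat => tau_xy.
rewrite (addnC k2) (addnC k1) !Delta_pownD -!catA; apply: pe_catl; rewrite !catA; apply: pe_catr.
apply: pe_trans (pe_catr _ (pe_sym (pe_iter_tau_Delta_pown n k k2))) _.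
by apply: pe_trans tau_xy _; apply/pe_catr/pe_iter_tau_Delta_pown.
Qed.

Lemma frac_equiv_mull x y z : gen_word n z.2 -> frac_equiv x y ->
  frac_equiv (frac_mul z x) (frac_mul z y).
Proof.
case: x y z => k1 P1 [k2 P2] [k Q] /= gen_Q xy; rewrite /frac_equiv /= in xy *.
rewrite !Delta_pownD -!catA; apply: pe_catl.
apply: pe_trans (_ : pe (map (iter k2 (tau n)) (map (iter k1 (tau n)) Q) ++ Delta_pown k2 ++ P1) _).
  by rewrite !catA; apply/pe_catr/pe_Delta_pown_word/gen_iter_tau.
apply: pe_trans (_ : pe (map (iter k1 (tau n)) (map (iter k2 (tau n)) Q) ++ Delta_pown k1 ++ P2) _).
  by rewrite !map_iter_tauD addnC; apply: pe_catl.
by rewrite !catA; apply/pe_catr/pe_sym/pe_Delta_pown_word/gen_iter_tau.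
Qed.

Lemma frac_mulA x y z : frac_mul (frac_mul x y) z = frac_mul x (frac_mul y z).
Proof.
case: x y z => k1 P1 [k2 P2] [k3 P3].
by rewrite /frac_mul /= addnA map_cat map_iter_tauD catA (addnC k3).
Qed.

Lemma fraction_cat u v : fraction (u ++ v) = frac_mul (fraction u) (fraction v).
Proof.
elim: u => [|a u IH] /=; last by rewrite IH frac_mulA.
by case: (fraction v) => k P; rewrite /frac_mul /= add0n.
Qed.

Lemma fraction_pos w : positive_word w -> fraction w = (0, w).
Proof.
elim: w => [//|a w IH] /= /andP [pos_a pos_w]; rewrite IH //.
by case: a pos_a => // i _; rewrite /frac_mul /= map_id_in.
Qed.

Definition validb (w : word) := all (fun a => 1 <= letter_index a <= n - 1) w.

Lemma sb_relation_valid l r : sb_relation n l r -> validb l /\ validb r.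
Proof.
have gen_valid w : gen_word n w -> validb w by move/gen_wordP => [].
case=> [l' r' /pos_relation_gen [gl gr]|i [? ?]|i [? ?]]; last 2 first.
- by rewrite /validb /=; split => //; lia.
- by rewrite /validb /=; split => //; lia.
by split; apply: gen_valid.
Qed.

Lemma sbe_validb u v : sb_eq n u v -> validb u = validb v.
Proof.
apply: cong_invariant => l r x y /sb_relation_valid [vl vr].
by rewrite /validb !all_cat -!/(validb _) vl vr.
Qed.

Lemma frac_equiv_rel l r : sb_relation n l r -> frac_equiv (fraction l) (fraction r).
Proof.
case=> [l' r' lr|i [i1 i2]|i [i1 i2]].
- have [/gen_wordP[pos_l _] /gen_wordP[pos_r _]] := pos_relation_gen lr.
  by rewrite /frac_equiv !fraction_pos //; apply: pe_rel.
- have gi : generator n (Sg i) by rewrite /generator /=; lia.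
  have i_ok : 1 <= i <= n - 1 by lia.
  rewrite /frac_equiv /= addn0 map_id_in // Delta_pown1 !cats0.
  apply: pe_sym; apply: (@pe_cancelr n [:: Sg i]).
    by rewrite gen_word_cat gen_Delta /gen_word /= gi.
  apply: pe_trans (pe_Delta_letter gi) _.
  exact: (pe_catl [:: tau n (Sg i)] (pe_Delta_cofactor i_ok)).
- have i_ok : 1 <= i <= n - 1 by lia.
  by rewrite /frac_equiv /= map_id_in // Delta_pown1 cats0; apply/pe_sym/pe_Delta_cofactor.
Qed.

Lemma sbe_frac_equiv u v : sb_eq n u v -> validb u -> frac_equiv (fraction u) (fraction v).
Proof.
elim=> {u v} [x y [u [v [l [r [lr [-> ->]]]]]]|x|x y xy IH|x y z xy IH1 yz IH2] valid_x.
- move: valid_x; rewrite /validb !all_cat -!/(validb _) => /and3P [vu _ _].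
  rewrite !fraction_cat; apply: frac_equiv_mull (gen_fraction vu) _.
  exact/frac_equiv_mulr/frac_equiv_rel.
- exact: pe_refl.
- by apply/pe_sym/IH; rewrite (sbe_validb xy).
- apply: frac_equiv_trans (IH1 valid_x) (IH2 _); first exact: gen_fraction.
  by rewrite -(sbe_validb xy).
Qed.

Lemma sbe_pe u v : gen_word n u -> gen_word n v -> sb_eq n u v -> pos_eq n u v.
Proof.
move=> /gen_wordP[pos_u valid_u] /gen_wordP[pos_v _] /sbe_frac_equiv /(_ valid_u).
by rewrite /frac_equiv !fraction_pos.
Qed.

End FractionEquivalence.

(** * Existence and uniqueness of the normal form *)

Lemma ex_minimal_nat (P : nat -> Prop) :
  (exists x, P x) -> exists x, P x /\ forall y, P y -> x <= y.
Proof.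
case=> x; elim/ltn_ind: x => x IH Px.
case: (classic (exists y, P y /\ y < x)) => [[y [Py yx]]|min_x]; first exact: IH yx Py.
by exists x; split => // y Py; rewrite leqNgt; apply/negP => yx; apply: min_x; exists y.
Qed.

Lemma ex_lex_min (L : nat) (P : seq nat -> Prop) : (forall s, P s -> size s = L) ->
  (exists s, P s) -> exists s, P s /\ forall t, P t -> lex_le s t.
Proof.
elim: L P => [|L IH] P sizeP [s Ps].
  by exists s; split => // t Pt; move: (sizeP s Ps); case: s {Ps}.
have [h0 [[t0 Pt0] min_h0]] : exists h0, (exists t, P (h0 :: t)) /\
    forall h, (exists t, P (h :: t)) -> h0 <= h.
  by apply: ex_minimal_nat; case: s Ps (sizeP s Ps) => // h t Ps _; exists h, t.
have size_tail t : P (h0 :: t) -> size t = L by move/sizeP => [].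
have [t1 [Pt1 min_t1]] := IH (fun t => P (h0 :: t)) size_tail (ex_intro _ t0 Pt0).
exists (h0 :: t1); split => // -[|h t] Pt; first by move: (sizeP _ Pt).
have := min_h0 h (ex_intro _ t Pt); rewrite leq_eqVlt /= => /orP [/eqP h0h|->] //.
by subst h; rewrite ltnn eqxx min_t1.
Qed.

Lemma lex_le_anti s t : lex_le s t -> lex_le t s -> s = t.
Proof.
elim: s t => [|a s IH] [|b t] //= /orP [ab|/andP [/eqP ab st]] /orP [ba|/andP [/eqP ba ts]];
  try lia; by rewrite ab (IH t).
Qed.

Section NormalForm.
Variable n : nat.
Local Notation pe := (pos_eq n).
Local Notation sbe := (sb_eq n).
Local Notation Delta_pown := (Delta_pown n).
Local Notation Delta_inv_pown := (Delta_inv_pown n).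

Lemma prime_to_Delta_pe A B : prime_to_Delta n A -> pe A B -> prime_to_Delta n B.
Proof.
move=> prime_A AB [Z [pos_Z [valid_Z BZ]]]; apply: prime_A.
by exists Z; split => //; split => //; apply: pe_trans AB BZ.
Qed.

Lemma Delta_pown_factor P : 2 <= n -> gen_word n P ->
  exists j A, [/\ gen_word n A, pe P (Delta_pown j ++ A) & prime_to_Delta n A].
Proof.
move=> n2; have Delta_pos : 0 < size (Delta n).
  rewrite Delta_garside; have -> : n - 1 = (n - 2).+1 by lia.
  by rewrite garsideS size_cat size_map size_iota.
have [d] := ubnP (size P); elim: d P => // d IH P size_P gen_P.
case: (classic (prime_to_Delta n P)) => [prime_P|/NNPP [Z [pos_Z [valid_Z PZ]]]].
  by exists 0, P; split => //; apply: pe_refl.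
have := pe_size PZ; rewrite size_cat => size_PZ.
have [|j [A [gen_A ZA prime_A]]] := IH Z _ (introT (gen_wordP _ _) (conj pos_Z valid_Z)).
  by lia.
exists j.+1, A; split => //; apply: pe_trans PZ _.
by rewrite Delta_pownS -catA; apply: pe_catl.
Qed.

Lemma own_base_exists A : gen_word n A -> exists B, [/\ gen_word n B, pe A B & is_own_base n B].
Proof.
move=> gen_A.
pose P s := exists B, [/\ gen_word n B, pe A B & map (letter_rank n) B = s].
have sizeP s : P s -> size s = size A by case=> B [_ AB <-]; rewrite size_map (pe_size AB).
have PA : P (map (letter_rank n) A) by exists A; split => //; apply: pe_refl.
have [_ [[B [gen_B AB <-]] min_B]] := ex_lex_min sizeP (ex_intro _ _ PA).
exists B; split => // C pos_C valid_C BC; apply: min_B.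
by exists C; split => //; [apply/gen_wordP | apply: pe_trans AB BC].
Qed.

Lemma sbe_Delta_pow_sub k j :
  sbe (Delta_inv_pown k ++ Delta_pown j) (Delta_pow n (Posz j - Posz k)%R).
Proof.
case: (leqP k j) => kj.
  rewrite -(subnKC kj) Delta_pownD catA; apply: sbe_trans (sbe_catr _ (sbe_Delta_inv_pown n k)) _.
  by rewrite subzn ?leq_addr // addKn; apply: sbe_refl.
rewrite -(subnK (ltnW kj)) Delta_inv_pownD -catA.
apply: sbe_trans (sbe_catl _ (sbe_Delta_inv_pown n j)) _; rewrite cats0.
have -> : (Posz j - Posz (k - j + j))%R = Negz (k - j).-1 by rewrite NegzE; lia.
by rewrite /Delta_pow prednK ?subn_gt0 //; apply: sbe_refl.
Qed.

Lemma normal_form_exists W : 2 <= n -> valid_word n W -> exists (m : int) (A : word),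
  positive_word A /\ valid_word n A /\ prime_to_Delta n A /\ is_own_base n A /\
  sbe W (Delta_pow n m ++ A).
Proof.
move=> n2 valid_W.
have [j [A [gen_A PA prime_A]]] := Delta_pown_factor n2 (gen_fraction valid_W).
have [B [/gen_wordP[pos_B valid_B] AB base_B]] := own_base_exists gen_A.
exists (Posz j - Posz (fraction n W).1)%R, B; split => //; split => //.
split; first exact: prime_to_Delta_pe prime_A AB.
split => //.
apply: sbe_trans (sbe_fraction valid_W) _.
apply: sbe_trans (sbe_catl _ (pe_sbe (pe_trans PA (pe_catl _ AB)))) _.
by rewrite catA; apply/sbe_catr/sbe_Delta_pow_sub.
Qed.

Lemma sbe_Delta_pown_pow K m : (`|m| <= K)%N ->
  exists a : nat, Posz a = (Posz K + m)%R /\ sbe (Delta_pown K ++ Delta_pow n m) (Delta_pown a).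
Proof.
case: m => j /= jK.
  by exists (K + j); split; [lia | rewrite Delta_pownD; apply: sbe_refl].
exists (K - j.+1); split; first by rewrite NegzE; lia.
rewrite -{1}(subnK jK) Delta_pownD -catA.
by apply: sbe_trans (sbe_catl _ (sbe_Delta_pown_inv n j.+1)) _; rewrite cats0; apply: sbe_refl.
Qed.

Lemma Delta_pown_le_of_prime a b A C : gen_word n A -> gen_word n C -> prime_to_Delta n C ->
  pe (Delta_pown a ++ A) (Delta_pown b ++ C) -> a <= b.
Proof.
move=> gen_A gen_C prime_C aA_bC; rewrite leqNgt; apply/negP => ba.
have ab0 : 0 < a - b by rewrite subn_gt0.
move: aA_bC; rewrite -(subnK (ltnW ba)) addnC Delta_pownD -catA => /pe_sym /pe_cancell.
rewrite gen_word_cat gen_Delta_pown gen_C -(prednK ab0) Delta_pownS -catA.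
move=> /(_ isT) C_DeltaZ; apply: prime_C; exists (Delta_pown (a - b).-1 ++ A).
have /gen_wordP[? ?] : gen_word n (Delta_pown (a - b).-1 ++ A).
  by rewrite gen_word_cat gen_Delta_pown.
by split; last split.
Qed.

Lemma letter_rank_inj A C : gen_word n A -> gen_word n C ->
  map (letter_rank n) A = map (letter_rank n) C -> A = C.
Proof.
elim: A C => [|a A IH] [|c C] //= /andP [ga gen_A] /andP [gc gen_C] [ac AC].
rewrite (IH C) //; congr cons.
by move: ga gc ac; case: a => i; case: c => j; rewrite /generator /= => // ? ? E;
  first [lia | by rewrite E | by have -> : i = j by lia].
Qed.

Lemma own_base_unique A C : gen_word n A -> gen_word n C ->
  is_own_base n A -> is_own_base n C -> pe A C -> A = C.
Proof.
move=> gen_A gen_C base_A base_C AC.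
have /gen_wordP[pos_A valid_A] := gen_A; have /gen_wordP[pos_C valid_C] := gen_C.
apply: letter_rank_inj gen_A gen_C _.
by apply: lex_le_anti; [apply: base_A | apply: base_C => //; apply: pe_sym].
Qed.

Lemma normal_form_unique (m p : int) (A C : word) :
  gen_word n A -> prime_to_Delta n A -> is_own_base n A ->
  gen_word n C -> prime_to_Delta n C -> is_own_base n C ->
  sbe (Delta_pow n m ++ A) (Delta_pow n p ++ C) -> m = p /\ A = C.
Proof.
move=> gen_A prime_A base_A gen_C prime_C base_C mA_pC.
have [a [Ea aK]] := @sbe_Delta_pown_pow (`|m| + `|p|) m (leq_addr _ _).
have [b [Eb bK]] := @sbe_Delta_pown_pow (`|m| + `|p|) p (leq_addl _ _).
have gen_aA : gen_word n (Delta_pown a ++ A) by rewrite gen_word_cat gen_Delta_pown.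
have gen_bC : gen_word n (Delta_pown b ++ C) by rewrite gen_word_cat gen_Delta_pown.
have aA_bC : pe (Delta_pown a ++ A) (Delta_pown b ++ C).
  apply: sbe_pe gen_aA gen_bC _; apply: sbe_trans (sbe_catr _ (sbe_sym aK)) _.
  by rewrite -catA; apply: sbe_trans (sbe_catl _ mA_pC) _; rewrite catA; apply: sbe_catr bK.
have ab : a = b.
  apply/eqP; rewrite eqn_leq (Delta_pown_le_of_prime gen_A gen_C prime_C aA_bC).
  exact: (Delta_pown_le_of_prime gen_C gen_A prime_A (pe_sym aA_bC)).
subst b; split; first lia.
exact: own_base_unique gen_A gen_C base_A base_C (pe_cancell gen_aA aA_bC).
Qed.

End NormalForm.

Theorem theorem2p1 (n : nat) (hn : 2 <= n) :
  (forall W : word, valid_word n W ->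
     exists (m : int) (A : word),
       positive_word A /\ valid_word n A /\ prime_to_Delta n A /\
       is_own_base n A /\ sb_eq n W (Delta_pow n m ++ A))
  /\
  (forall (m p : int) (A C : word),
     positive_word A -> valid_word n A -> prime_to_Delta n A -> is_own_base n A ->
     positive_word C -> valid_word n C -> prime_to_Delta n C -> is_own_base n C ->
     sb_eq n (Delta_pow n m ++ A) (Delta_pow n p ++ C) ->
     m = p /\ A = C).
Proof.
split=> [W | m p A C pos_A valid_A prime_A base_A pos_C valid_C prime_C base_C].
  exact: normal_form_exists.
by apply: normal_form_unique => //; apply/gen_wordP.
Qed.
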